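(* Let $n\ge 1$, $\rho>0$, $\tau>0$, and let $A\in\mathbb{R}^{n\times n}$ be symmetric positive semidefinite with eigendecomposition $A=U\Sigma U^T$, where $U\in\mathbb{R}^{n\times n}$ is orthogonal and $\Sigma=\operatorname{diag}(\sigma_1,\dots,\sigma_n)$ with $\sigma_i\ge 0$. For each $i$ let $g_i(\gamma)=\frac{\rho}{2}(\sigma_i-\gamma^2)^2+\tau\gamma$ and let $\gamma_i^*\in\arg\min_{\gamma\ge 0} g_i(\gamma)$. Then: (i) each $\gamma_i^*$ belongs to the set $\{\alpha\in\mathbb{R}_{\ge 0} : p_{\sigma_i,\tau/(2\rho)}(\alpha)=0\}\cup\{0\}$, where $p_{a,b}(x)=x^3-ax+b$; (ii) $$\min_{L\in\mathbb{R}^{n\times n}} \frac{\rho}{2}\|A-L^TL\|_F^2+\tau\|L\|_* \;=\; \sum_{i=1}^n\Big(\frac{\rho}{2}(\sigma_i-\gamma_i^{*2})^2+\tau\gamma_i^*\Big);$$ (iii) this minimum is attained at $L^*=\Gamma^*U^T$, where $\Gamma^*=\operatorname{diag}(\gamma_1^*,\dots,\gamma_n^* )$ is a diagonal matrix with nonnegative entries.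
   Context: $\|M\|_F$ denotes the Frobenius norm and $\|M\|_*$ the nuclear (trace) norm of $M$, i.e. the sum of its singular values. *)

(* real numbers are modelled by an arbitrary real closed field R. *)
From HB Require Import structures.
From mathcomp Require Import all_boot all_order all_algebra.
Set Implicit Arguments. Unset Strict Implicit. Unset Printing Implicit Defensive.
Import Order.TTheory GRing.Theory Num.Theory.
Local Open Scope ring_scope.

Section Defs.
Variable R : rcfType.

Definition orthogonal_mx n (U : 'M[R]_n) : Prop := U^T *m U = 1%:M /\ U *m U^T = 1%:M.

Definition frob_sq n (M : 'M[R]_n) : R := \sum_(i < n) \sum_(j < n) (M i j) ^+ 2.

Definition svd_of n (L : 'M[R]_n) (U : 'M[R]_n) (s : 'I_n -> R) (V : 'M[R]_n) : Prop :=
  [/\ orthogonal_mx U, orthogonal_mx V, (forall i, 0 <= s i)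
    & L = U *m diag_mx (\row_i s i) *m V^T].

Definition is_nuclear_norm n (L : 'M[R]_n) (t : R) : Prop :=
  exists U s V, svd_of L U s V /\ t = \sum_(i < n) s i.

Definition p_ab (a b x : R) : R := x ^+ 3 - a * x + b.

Definition g_fun (rho tau sigma gamma : R) : R :=
  rho / 2 * (sigma - gamma ^+ 2) ^+ 2 + tau * gamma.

(* objective rho/2 ||A - L^T L||_F^2 + tau * t  (t = ||L||_* ) *)
Definition objective n (rho tau : R) (A L : 'M[R]_n) (t : R) : R :=
  rho / 2 * frob_sq (A - L^T *m L) + tau * t.

End Defs.

(* Write L = P diag(s) V^T and M = U^T V.  Since P and U are orthogonal, the
   Frobenius term only sees diag(sigma) M - M diag(s^2), whose (i, j) entry is
   M_ij (sigma_i - s_j^2); as the M_ij^2 form a doubly stochastic matrix, the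
   whole objective becomes sum_ij M_ij^2 g_i(s_j) >= sum_i g_i(gamma*_i), with
   equality for M = 1, i.e. L = Gamma* U^T.  Part (i) is stationarity:
   g_i'(gamma) = 2 rho p(gamma) vanishes at an interior minimum. *)

From HB Require Import structures.
From mathcomp Require Import all_boot all_order all_algebra.
From mathcomp Require Import ring lra.
Import Order.TTheory GRing.Theory Num.Theory.
Set Implicit Arguments. Unset Strict Implicit. Unset Printing Implicit Defensive.
Local Open Scope ring_scope.

(* At a local minimum x of f, f (x + e) - f x = e * D + e^2 * F e with F
   bounded above near 0 forces D = 0: take e = - a D with a small. *)
Lemma first_order_coef_eq0 (R : realFieldType) (D K d : R) (F : R -> R) :
  0 < d -> 0 < K ->
  (forall e, `|e| <= d -> 0 <= e * D + e ^+ 2 * F e) ->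
  (forall e, `|e| <= d -> F e <= K) -> D = 0.
Proof.
move=> d_gt0 K_gt0 hmin hF.
have hD1 : 0 < `|D| + 1 by rewrite ltr_wpDl.
set a := Num.min (1 / (2 * K)) (d / (`|D| + 1)).
have a_gt0 : 0 < a by rewrite lt_min !divr_gt0 ?mulr_gt0.
have aK : a * (2 * K) <= 1.
  by rewrite -ler_pdivlMr ?mulr_gt0 // ge_min lexx.
have aD : a * (`|D| + 1) <= d.
  by rewrite -ler_pdivlMr // ge_min lexx orbT.
have e_small : `|- (a * D)| <= d.
  rewrite normrN normrM gtr0_norm //.
  by apply: le_trans aD; rewrite ler_pM2l // lerDl.
have hmin_e := hmin _ e_small.
have aD2 : a * D ^+ 2 <= 0.
  have hK : (a * D) ^+ 2 * F (- (a * D)) <= (a * D) ^+ 2 * K.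
    by apply: ler_wpM2l; [exact: sqr_ge0 | exact: hF].
  have hK2 : (a * D) ^+ 2 * K <= a * D ^+ 2 / 2.
    have -> : (a * D) ^+ 2 * K = a * D ^+ 2 * (a * K) by ring.
    have -> : a * D ^+ 2 / 2 = a * D ^+ 2 * (1 / 2) by ring.
    by apply: ler_wpM2l; [rewrite mulr_ge0 ?sqr_ge0 ?ltW | lra].
  rewrite sqrrN in hmin_e; lra.
by apply/eqP; rewrite -sqrf_eq0 eq_le sqr_ge0 andbT -(pmulr_rle0 _ a_gt0).
Qed.

Section Objective.
Variable R : rcfType.
Implicit Types (rho tau sigma gamma : R).

Lemma g_fun_shift rho tau sigma gamma e : rho != 0 ->
  g_fun rho tau sigma (gamma + e) - g_fun rho tau sigma gamma =
  e * (2 * rho * p_ab sigma (tau / (2 * rho)) gamma)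
  + e ^+ 2 * (rho / 2 * ((2 * gamma + e) ^+ 2 - 2 * (sigma - gamma ^+ 2))).
Proof. by move=> rho_neq0; rewrite /g_fun /p_ab; field. Qed.

Lemma g_fun_min_root rho tau sigma gamma : 0 < rho -> 0 < gamma ->
  (forall c, 0 <= c -> g_fun rho tau sigma gamma <= g_fun rho tau sigma c) ->
  p_ab sigma (tau / (2 * rho)) gamma = 0.
Proof.
move=> rho_gt0 gamma_gt0 hmin.
set K := rho / 2 * (9 * gamma ^+ 2 + 2 * `|sigma - gamma ^+ 2|) + 1.
have K_gt0 : 0 < K.
  have := normr_ge0 (sigma - gamma ^+ 2); have := sqr_ge0 gamma; rewrite /K; nra.
suff /eqP : 2 * rho * p_ab sigma (tau / (2 * rho)) gamma = 0.
  by rewrite mulf_eq0 mulf_eq0 pnatr_eq0 (gt_eqF rho_gt0) => /eqP.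
pose F e := rho / 2 * ((2 * gamma + e) ^+ 2 - 2 * (sigma - gamma ^+ 2)).
apply: (@first_order_coef_eq0 _ _ _ _ F gamma_gt0 K_gt0) => e.
  rewrite ler_norml => /andP[e_ge e_le].
  by rewrite -g_fun_shift ?gt_eqF // subr_ge0 hmin //; lra.
rewrite ler_norml => /andP[e_ge e_le].
have hsq : (2 * gamma + e) ^+ 2 <= 9 * gamma ^+ 2 by nra.
have hnorm := ler_norm (- (sigma - gamma ^+ 2)); rewrite normrN in hnorm.
rewrite /F /K; apply: ler_wpDr => //; apply: ler_wpM2l; first by rewrite divr_ge0 ?ltW.
lra.
Qed.

Lemma frob_sq_trmx n (X : 'M[R]_n) : frob_sq X^T = frob_sq X.
Proof.
by rewrite /frob_sq exchange_big; apply: eq_bigr => i _; apply: eq_bigr => j _; rewrite mxE.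
Qed.

Lemma frob_sq_mulmx_orthogonal n (X M : 'M[R]_n) :
  M *m M^T = 1%:M -> frob_sq (X *m M) = frob_sq X.
Proof.
have frob_sq_tr (Y : 'M[R]_n) : frob_sq Y = \tr (Y *m Y^T).
  rewrite /frob_sq /mxtrace; apply: eq_bigr => i _; rewrite mxE.
  by apply: eq_bigr => j _; rewrite !mxE expr2.
by move=> hM; rewrite !frob_sq_tr trmx_mul -mulmxA (mulmxA M) hM mul1mx.
Qed.

Lemma frob_sq_orthogonal_mulmx n (M X : 'M[R]_n) :
  M^T *m M = 1%:M -> frob_sq (M *m X) = frob_sq X.
Proof.
by move=> hM; rewrite -frob_sq_trmx trmx_mul frob_sq_mulmx_orthogonal ?trmxK // frob_sq_trmx.
Qed.

Lemma frob_sq_diag_mulmx_sub n (s d : 'I_n -> R) (M : 'M[R]_n) :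
  frob_sq (diag_mx (\row_i s i) *m M - M *m diag_mx (\row_j d j))
  = \sum_i \sum_j M i j ^+ 2 * (s i - d j) ^+ 2.
Proof.
apply: eq_bigr => i _; apply: eq_bigr => j _.
by rewrite mul_diag_mx mul_mx_diag !mxE -exprMn mulrBr mulrC.
Qed.

Lemma sum_sqr_row n (M : 'M[R]_n) i : M *m M^T = 1%:M -> \sum_j M i j ^+ 2 = 1.
Proof.
move=> /(congr1 (fun X : 'M[R]_n => X i i)); rewrite !mxE eqxx mulr1n => <-.
by apply: eq_bigr => j _; rewrite !mxE expr2.
Qed.

Lemma sum_sqr_col n (M : 'M[R]_n) j : M^T *m M = 1%:M -> \sum_i M i j ^+ 2 = 1.
Proof.
move=> hM; rewrite -(@sum_sqr_row _ M^T j) ?trmxK //.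
by apply: eq_bigr => i _; rewrite mxE.
Qed.

Lemma orthogonal_mx_trmx_mul n (U V : 'M[R]_n) :
  orthogonal_mx U -> orthogonal_mx V -> orthogonal_mx (U^T *m V).
Proof.
case=> hU1 hU2 [hV1 hV2]; split; rewrite trmx_mul trmxK.
  by rewrite -mulmxA (mulmxA U) hU2 mul1mx hV1.
by rewrite -mulmxA (mulmxA V) hV2 mul1mx hU1.
Qed.

Lemma objective_svd n rho tau (A U : 'M[R]_n) (sigma : 'I_n -> R)
    (L P V : 'M[R]_n) (s : 'I_n -> R) :
  orthogonal_mx U -> A = U *m diag_mx (\row_i sigma i) *m U^T -> svd_of L P s V ->
  objective rho tau A L (\sum_i s i)
  = \sum_i \sum_j ((U^T *m V) i j) ^+ 2 * g_fun rho tau (sigma i) (s j).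
Proof.
move=> hU hA [[hP1 _] hV _ hL].
have [hM1 _] := orthogonal_mx_trmx_mul hU hV.
set M := U^T *m V; set S := diag_mx (\row_i sigma i); set D := diag_mx (\row_j s j ^+ 2).
have LtL : L^T *m L = V *m D *m V^T.
  rewrite hL !trmx_mul !trmxK tr_diag_mx -!mulmxA (mulmxA P^T) hP1 mul1mx.
  rewrite !mulmxA -(mulmxA V) mulmx_diag; congr (_ *m diag_mx _ *m _).
  by apply/rowP => j; rewrite !mxE expr2.
have frob_eq : frob_sq (A - L^T *m L) = frob_sq (S *m M - M *m D).
  rewrite -(frob_sq_orthogonal_mulmx (A - L^T *m L) (M := U^T)) ?trmxK; last by case: hU.
  rewrite -(frob_sq_mulmx_orthogonal _ hV.2) hA LtL.
  congr frob_sq; rewrite mulmxBr mulmxBl !mulmxA (proj1 hU) mul1mx.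
  by rewrite -(mulmxA _ V^T) (proj1 hV) mulmx1 -(mulmxA S).
have sum_eq : \sum_j s j = \sum_i \sum_j M i j ^+ 2 * s j.
  rewrite exchange_big; apply: eq_bigr => j _.
  by rewrite -mulr_suml (sum_sqr_col j hM1) mul1r.
rewrite /objective frob_eq frob_sq_diag_mulmx_sub sum_eq !mulr_sumr -big_split.
apply: eq_bigr => i _; rewrite !mulr_sumr -big_split; apply: eq_bigr => j _.
by rewrite /g_fun /=; ring.
Qed.

End Objective.

Theorem theorem3p1 (R : rcfType) (n : nat) (hn : (0 < n)%N) (rho tau : R)
  (hrho : 0 < rho) (htau : 0 < tau) (A U : 'M[R]_n) (sigma : 'I_n -> R)
  (hsym : A^T = A) (hU : orthogonal_mx U) (hsig : forall i, 0 <= sigma i)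
  (hA : A = U *m diag_mx (\row_i sigma i) *m U^T)
  (gamma : 'I_n -> R) (hg0 : forall i, 0 <= gamma i)
  (hgmin : forall i (c : R), 0 <= c -> g_fun rho tau (sigma i) (gamma i) <= g_fun rho tau (sigma i) c) :
  (* (i) *)
  (forall i, (0 <= gamma i /\ p_ab (sigma i) (tau / (2 * rho)) (gamma i) = 0) \/ gamma i = 0)
  (* (ii) lower bound: every L (with t = ||L||_* ) has objective >= the sum *)
  /\ (forall (L : 'M[R]_n) (t : R), is_nuclear_norm L t ->
        \sum_(i < n) g_fun rho tau (sigma i) (gamma i) <= objective rho tau A L t)
  (* (ii)+(iii) the value is attained at L* = Gamma* U^T *)
  /\ (exists t, is_nuclear_norm (diag_mx (\row_i gamma i) *m U^T) t /\
        objective rho tau A (diag_mx (\row_i gamma i) *m U^T) t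
        = \sum_(i < n) g_fun rho tau (sigma i) (gamma i)).
Proof.
split.
  move=> i; have [-> | gamma_neq0] := eqVneq (gamma i) 0; [by right | left].
  split=> //; apply: g_fun_min_root => //; last exact: hgmin.
  by rewrite lt_neqAle eq_sym gamma_neq0 hg0.
split.
  move=> L t [P [s [V [[hP hV s_ge0 hL] ->]]]].
  have [_ hM] := orthogonal_mx_trmx_mul hU hV.
  rewrite (objective_svd _ _ hU hA (And4 hP hV s_ge0 hL)); apply: ler_sum => i _.
  rewrite -[X in X <= _]mul1r -(sum_sqr_row i hM) mulr_suml; apply: ler_sum => j _.
  by apply: ler_wpM2l; [exact: sqr_ge0 | exact: hgmin].
have hs : svd_of (diag_mx (\row_i gamma i) *m U^T) 1%:M gamma U.
  by split=> //; rewrite ?mul1mx //; split; rewrite trmx1 mul1mx.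
exists (\sum_i gamma i); split; first by exists 1%:M, gamma, U.
rewrite (objective_svd _ _ hU hA hs) (proj1 hU); apply: eq_bigr => i _.
rewrite (bigD1 i) //= big1 => [|j /negPf j_neq_i].
  by rewrite mxE eqxx expr1n mul1r addr0.
by rewrite mxE eq_sym j_neq_i expr0n mul0r.
Qed.
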